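(* Let $n\ge2$, let $T$ be any representation of $U'_q(\mathrm{so}_n)$ on a complex vector space $\mathcal V$ with basis $\{v_\alpha\}$, and let $\mathcal V_{\mathbf 1}$ be an $n$-dimensional space with basis $v_1,\dots,v_n$. Then the linear maps $T^\otimes(I_{j,j-1})$, $j=2,\dots,n$, on $\mathcal V^\otimes=\mathcal V_{\mathbf 1}\otimes\mathcal V$ given by $$T^\otimes(I_{j,j-1})(v_{j-1}\otimes v_\alpha)=q\,v_{j-1}\otimes T(I_{j,j-1})v_\alpha-q^{1/2}\,v_j\otimes v_\alpha,$$ $$T^\otimes(I_{j,j-1})(v_{j}\otimes v_\alpha)=q^{-1}\,v_{j}\otimes T(I_{j,j-1})v_\alpha+q^{-1/2}\,v_{j-1}\otimes v_\alpha,$$ $$T^\otimes(I_{j,j-1})(v_k\otimes v_\alpha)=v_k\otimes T(I_{j,j-1})v_\alpha\quad (k\ne j,\ k\ne j-1),$$ define a representation $T^\otimes$ of $U'_q(\mathrm{so}_n)$ on $\mathcal V^\otimes$.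
   Context: Fix $q\in\mathbb{C}$, $q\ne0,\pm1$, not a root of unity, and a square root $q^{1/2}$. The algebra $U'_q(\mathrm{so}_n)$ is the unital complex associative algebra generated by $I_{21},I_{32},\dots,I_{n,n-1}$ with relations $I_{j,j-1}^2I_{j-1,j-2}+I_{j-1,j-2}I_{j,j-1}^2-(q+q^{-1})I_{j,j-1}I_{j-1,j-2}I_{j,j-1}=-I_{j-1,j-2}$, $I_{j-1,j-2}^2I_{j,j-1}+I_{j,j-1}I_{j-1,j-2}^2-(q+q^{-1})I_{j-1,j-2}I_{j,j-1}I_{j-1,j-2}=-I_{j,j-1}$, and $[I_{i,i-1},I_{j,j-1}]=0$ if $|i-j|>1$. A representation is an algebra homomorphism into the endomorphisms of the space (determined by the images of the generators). *)

From mathcomp Require Import all_boot all_algebra.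
From mathcomp Require Import Rstruct complex.
Set Implicit Arguments. Unset Strict Implicit. Unset Printing Implicit Defensive.
Import GRing.Theory.
Local Open Scope ring_scope.

Notation Cplx := (Rdefinitions.R[i]).

Definition q_generic (q : Cplx) : Prop :=
  [/\ q != 0, q != 1, q != -1 & forall k : nat, (0 < k)%N -> q ^+ k != 1].

(* A representation of U'_q(so_n) on the complex vector space V:
   T j is the image of the generator I_{j,j-1} (2 <= j <= n); these must be
   linear maps satisfying the defining relations of U'_q(so_n)
   (operator product I I' read as composition). *)
Definition is_rep_Uqso (V : lmodType Cplx) (n : nat) (q : Cplx)
    (T : nat -> V -> V) : Prop :=
  [/\ (forall j, (2 <= j <= n)%N ->
         forall (a : Cplx) (u v : V), T j (a *: u + v) = a *: T j u + T j v),
      (forall j, (3 <= j <= n)%N -> forall v : V,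
         T j (T j (T j.-1 v)) + T j.-1 (T j (T j v))
           - (q + q^-1) *: T j (T j.-1 (T j v)) = - T j.-1 v),
      (forall j, (3 <= j <= n)%N -> forall v : V,
         T j.-1 (T j.-1 (T j v)) + T j (T j.-1 (T j.-1 v))
           - (q + q^-1) *: T j.-1 (T j (T j.-1 v)) = - T j v)
    & (forall i j, (2 <= i <= n)%N -> (2 <= j <= n)%N -> (j.+1 < i)%N ->
         forall v : V, T i (T j v) = T j (T i v))].

(* The tensor product V_1 (x) V, with V_1 having basis v_1, ..., v_n, is
   identified with V^n = {ffun 'I_n -> V} via  sum_k v_{k+1} (x) w k  <-> w.
   [comp w m] is the V-component of w along the basis vector v_{m+1}
   (0 if m >= n). *)
Definition comp (V : lmodType Cplx) (n : nat) (w : {ffun 'I_n -> V}) (m : nat) : V :=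
  match (insub m : option 'I_n) with Some k => w k | None => 0 end.

(* T^(x)(I_{j,j-1}) on V_1 (x) V, with s = q^{1/2}: the linear extension of
     v_{j-1} (x) x |-> q v_{j-1} (x) T x - s v_j (x) x,
     v_j     (x) x |-> q^-1 v_j (x) T x + s^-1 v_{j-1} (x) x,
     v_k     (x) x |-> v_k (x) T x  (k <> j-1, j).
   Component along v_{k+1} (k : 'I_n, 0-based). *)
Definition tensor_op (V : lmodType Cplx) (n : nat) (q s : Cplx)
    (T : nat -> V -> V) (j : nat) (w : {ffun 'I_n -> V}) : {ffun 'I_n -> V} :=
  [ffun k : 'I_n =>
     if k.+1 == j.-1 then q *: T j (w k) + s^-1 *: comp w j.-1
     else if k.+1 == j then q^-1 *: T j (w k) - s *: comp w j.-2
     else T j (w k)].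

(* Write a vector of V_1 (x) V as the sequence (w_k) of its components along
   v_1, ..., v_n.  Then T^(x)(I_{j,j-1}) acts on w_k through T(I_{j,j-1})
   alone, except on the components k = j-1 and j, which it also mixes.  So
   every defining relation can be checked componentwise: on a component left
   alone by the generators involved it is the relation for T, and on each of
   the (at most three) remaining components it becomes, after one use of the
   relation for T, an identity between linear combinations of T-words with
   coefficients in Z[q^{1/2}, q^{-1/2}].  Such identities are decided by
   [ring] in the trivial extension Cplx x V, with product
   (a, u)(b, v) = (ab, av + bu), a commutative ring in which V embeds
   linearly as a square-zero ideal. *)

From Pilot Require Import Defs.
From mathcomp Require Import all_boot all_algebra.
From mathcomp Require Import Rstruct complex.
From mathcomp Require Import zify.
From Stdlib Require Import Ring_theory Ring FunctionalExtensionality.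
Set Implicit Arguments. Unset Strict Implicit. Unset Printing Implicit Defensive.
Import GRing.Theory.
Local Open Scope ring_scope.

(* ssrfun's function composition [comp] would otherwise shadow it. *)
Local Notation comp := Pilot.Defs.comp.

Section TrivialExtension.
Variables (R : comPzRingType) (V : lmodType R).

Definition ext := (R * V)%type.
Definition ext_add (x y : ext) : ext := (x.1 + y.1, x.2 + y.2).
Definition ext_opp (x : ext) : ext := (- x.1, - x.2).
Definition ext_mul (x y : ext) : ext := (x.1 * y.1, x.1 *: y.2 + y.1 *: x.2).
Definition ext_sub (x y : ext) : ext := ext_add x (ext_opp y).

Lemma ext_ring_theory :
  ring_theory ((0, 0) : ext) (1, 0) ext_add ext_mul ext_sub ext_opp (@eq ext).
Proof.
split.
- by case=> a u; rewrite /ext_add /= !add0r.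
- by case=> a u [b v]; rewrite /ext_add /= addrC (addrC u).
- by case=> a u [b v] [c w]; rewrite /ext_add /= !addrA.
- by case=> a u; rewrite /ext_mul /= mul1r scale1r scaler0 addr0.
- by case=> a u [b v]; rewrite /ext_mul /= mulrC addrC.
- case=> a u [b v] [c w]; rewrite /ext_mul /= mulrA; congr pair.
  by rewrite !scalerDr !scalerA addrA (mulrC c a) (mulrC c b) (addrC (_ *: w)).
- case=> a u [b v] [c w]; rewrite /ext_mul /ext_add /= mulrDl; congr pair.
  by rewrite scalerDl scalerDr addrACA.
- by [].
- by case=> a u; rewrite /ext_add /ext_opp /= !subrr.
Qed.

Definition ext_scal (a : R) : ext := (a, 0).
Definition ext_vec (u : V) : ext := (0, u).

Lemma ext_vec_inj : injective ext_vec. Proof. by move=> u v [->]. Qed.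

Lemma ext_vecD u v : ext_vec (u + v) = ext_add (ext_vec u) (ext_vec v).
Proof. by rewrite /ext_add /= addr0. Qed.

Lemma ext_vecN u : ext_vec (- u) = ext_opp (ext_vec u).
Proof. by rewrite /ext_opp /= oppr0. Qed.

Lemma ext_vecZ a u : ext_vec (a *: u) = ext_mul (ext_scal a) (ext_vec u).
Proof. by rewrite /ext_mul /= mulr0 scaler0 addr0. Qed.

Lemma ext_scalD a b : ext_scal (a + b) = ext_add (ext_scal a) (ext_scal b).
Proof. by rewrite /ext_add /= addr0. Qed.

Lemma ext_scalN a : ext_scal (- a) = ext_opp (ext_scal a).
Proof. by rewrite /ext_opp /= oppr0. Qed.

Lemma ext_scalM a b : ext_scal (a * b) = ext_mul (ext_scal a) (ext_scal b).
Proof. by rewrite /ext_mul /= !scaler0 addr0. Qed.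

End TrivialExtension.

Definition qserre_rel (q : Cplx) (W : lmodType Cplx) (X Y : W -> W) :=
  forall w, X (X (Y w)) + Y (X (X w)) - (q + q^-1) *: X (Y (X w)) = - Y w.

Section TensorRepresentation.
Variables (n : nat) (q s : Cplx) (V : lmodType Cplx) (T : nat -> V -> V).
Hypothesis s2q : s ^+ 2 = q.
Hypothesis q_neq0 : q != 0.
Hypothesis T_linear : forall j, (2 <= j <= n)%N ->
  forall (a : Cplx) (u v : V), T j (a *: u + v) = a *: T j u + T j v.

Lemma s_neq0 : s != 0.
Proof. by apply: contra q_neq0 => /eqP s0; rewrite -s2q s0 expr0n. Qed.

Lemma qE : q = s * s. Proof. by rewrite -s2q expr2. Qed.

Lemma invqE : q^-1 = s^-1 * s^-1. Proof. by rewrite qE invfM. Qed.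

Section LinearGenerator.
Variables (j : nat) (j_range : (2 <= j <= n)%N).

Lemma T0 : T j 0 = 0.
Proof.
have := T_linear j_range 1 0 0; rewrite !scale1r !addr0 => T0_twice.
by apply: (@addrI _ (T j 0)); rewrite addr0 -T0_twice.
Qed.

Lemma TD u v : T j (u + v) = T j u + T j v.
Proof. by rewrite -[u]scale1r T_linear // !scale1r. Qed.

Lemma TZ a u : T j (a *: u) = a *: T j u.
Proof. by rewrite -[a *: u]addr0 T_linear // T0 addr0. Qed.

Lemma TN u : T j (- u) = - T j u.
Proof. by rewrite -scaleN1r TZ scaleN1r. Qed.

End LinearGenerator.

Lemma compD (w1 w2 : {ffun 'I_n -> V}) m : comp (w1 + w2) m = comp w1 m + comp w2 m.
Proof. by rewrite /comp; case: insub => [k|] /=; rewrite ?ffunE ?addr0. Qed.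

Lemma compN (w : {ffun 'I_n -> V}) m : comp (- w) m = - comp w m.
Proof. by rewrite /comp; case: insub => [k|] /=; rewrite ?ffunE ?oppr0. Qed.

Lemma compZ a (w : {ffun 'I_n -> V}) m : comp (a *: w) m = a *: comp w m.
Proof. by rewrite /comp; case: insub => [k|] /=; rewrite ?ffunE ?scaler0. Qed.

Lemma comp_ext (w1 w2 : {ffun 'I_n -> V}) : comp w1 =1 comp w2 -> w1 = w2.
Proof. by move=> eq_w; apply/ffunP => k; have := eq_w k; rewrite /comp valK. Qed.

Local Notation Tx := (@tensor_op V n q s T).

Add Ring ext_ring : (ext_ring_theory V).

Lemma ext_s_mulV : ext_mul (ext_scal V s) (ext_scal V s^-1) = (1, 0).
Proof. by rewrite -ext_scalM mulfV ?s_neq0. Qed.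

Ltac ext_ring :=
  apply: ext_vec_inj;
  rewrite ?(ext_vecD, ext_vecN, ext_vecZ) ?invqE ?qE ?(ext_scalD, ext_scalM, ext_scalN);
  ring [ext_s_mulV].

(* [tensor_op] on component sequences; the index m is 0-based, as in [comp]. *)
Definition tensor_seq_op j (F : nat -> V) m :=
  if m.+1 == j.-1 then q *: T j (F m) + s^-1 *: F j.-1
  else if m.+1 == j then q^-1 *: T j (F m) - s *: F j.-2
  else T j (F m).

Lemma comp_tensor_op j (w : {ffun 'I_n -> V}) : (2 <= j <= n)%N ->
  comp (Tx j w) = tensor_seq_op j (comp w).
Proof.
move=> j_range; apply: functional_extensionality => m.
rewrite /tensor_seq_op /comp; case: insubP => [k _ <-|]; first by rewrite ffunE.
rewrite -leqNgt => n_le_m.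
by rewrite !ifN ?T0 //; lia.
Qed.

Lemma tensor_seq_op_prev j F m : m.+1 = j.-1 ->
  tensor_seq_op j F m = q *: T j (F m) + s^-1 *: F j.-1.
Proof. by move=> m_prev; rewrite /tensor_seq_op m_prev eqxx. Qed.

Lemma tensor_seq_op_cur j F m : m.+1 = j ->
  tensor_seq_op j F m = q^-1 *: T j (F m) - s *: F j.-2.
Proof. by move=> m_j; rewrite /tensor_seq_op ifN m_j ?eqxx //; lia. Qed.

Lemma tensor_seq_op_other j F m : m.+1 != j.-1 -> m.+1 != j ->
  tensor_seq_op j F m = T j (F m).
Proof. by move=> m_prev m_cur; rewrite /tensor_seq_op !ifN. Qed.

Ltac unfold_tensor_seq_op :=
  repeat match goal with |- context [tensor_seq_op ?j ?F ?m] =>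
    first [ rewrite (@tensor_seq_op_prev j F m); last by lia
          | rewrite (@tensor_seq_op_cur j F m); last by lia
          | rewrite (@tensor_seq_op_other j F m); [| by lia | by lia] ] end.

Lemma tensor_op_linear j : (2 <= j <= n)%N ->
  forall (a : Cplx) (u v : {ffun 'I_n -> V}),
  Tx j (a *: u + v) = a *: Tx j u + Tx j v.
Proof.
move=> j_range a u v; apply: comp_ext => m.
rewrite compD compZ !comp_tensor_op //.
have -> : comp (a *: u + v) = fun k => a *: comp u k + comp v k.
  by apply: functional_extensionality => k; rewrite compD compZ.
by rewrite /tensor_seq_op; case: ifP => _; [|case: ifP => _];
  rewrite ?(TD j_range, TZ j_range, TN j_range); ext_ring.
Qed.

Lemma tensor_op_comm i j : (2 <= i <= n)%N -> (2 <= j <= n)%N -> (j.+1 < i)%N ->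
  (forall v, T i (T j v) = T j (T i v)) ->
  forall w, Tx i (Tx j w) = Tx j (Tx i w).
Proof.
move=> i_range j_range j_lt_i T_comm w; apply: comp_ext => m.
rewrite !comp_tensor_op //.
case: (boolP (m.+1 == i.-1)) => ?; [|case: (boolP (m.+1 == i)) => ?];
  [| |case: (boolP (m.+1 == j.-1)) => ?; [|case: (boolP (m.+1 == j)) => ?]];
  unfold_tensor_seq_op;
  rewrite ?(TD i_range, TD j_range, TZ i_range, TZ j_range, TN i_range, TN j_range)
          ?T_comm //;
  ext_ring.
Qed.

(* On each component the three cubic words occur with one common scalar
   factor, so eliminating one of them through [T_serre'] leaves an identity
   of Laurent polynomials in s. *)
Lemma tensor_op_qserre a b : (3 <= maxn a b <= n)%N -> (a == b.+1) || (b == a.+1) ->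
  qserre_rel q (T a) (T b) ->
  qserre_rel q (Tx a) (Tx b).
Proof.
move=> ab_range ab_adj T_serre w.
have a_range : (2 <= a <= n)%N by lia.
have b_range : (2 <= b <= n)%N by lia.
have T_serre' v : T b (T a (T a v)) =
    - T b v - T a (T a (T b v)) + (q + q^-1) *: T a (T b (T a v)).
  by rewrite -(T_serre v); ext_ring.
have [i ab] : exists i, (a, b) = (i.+3, i.+2) \/ (a, b) = (i.+2, i.+3).
  by exists (maxn a b - 3)%N; case/orP: ab_adj => /eqP ab; [left | right]; congr pair; lia.
apply: comp_ext => m; rewrite !compD !compN !compZ !comp_tensor_op //.
case: ab => -[? ?]; subst a b;
  (case: (boolP (m \in [:: i; i.+1; i.+2])) => [|m_out];
    [ rewrite !inE => /or3P[] /eqP->; unfold_tensor_seq_op => /=;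
      rewrite ?(TD a_range, TD b_range, TZ a_range, TZ b_range, TN a_range, TN b_range)
              ?T_serre';
      ext_ring
    | rewrite !inE !negb_or in m_out; case/and3P: m_out => *;
      unfold_tensor_seq_op; exact: T_serre ]).
Qed.

End TensorRepresentation.

Theorem proposition2 (n : nat) (q s : Cplx) (V : lmodType Cplx)
    (T : nat -> V -> V) :
  (2 <= n)%N -> q_generic q -> s ^+ 2 = q ->
  is_rep_Uqso n q T ->
  is_rep_Uqso n q (@tensor_op V n q s T).
Proof.
move=> _ [q_neq0 _ _ _] s2q [T_linear T_serre1 T_serre2 T_comm]; split.
- exact: tensor_op_linear.
- by move=> j j_range; apply: tensor_op_qserre (T_serre1 j j_range) => //; lia.
- by move=> j j_range; apply: tensor_op_qserre (T_serre2 j j_range) => //; lia.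
- move=> i j i_range j_range j_lt_i.
  by apply: tensor_op_comm (T_comm i j i_range j_range j_lt_i).
Qed.
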